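(* Let $L\geq 2$ be an integer and $N=L^2$ (so $N\geq 2$), and let $\lambda,\mu\in\mathbb{C}$ be nonzero. For $J\in\mathbb{C}$ consider the polynomial potential $V_J:\mathbb{C}^N\to\mathbb{C}$, $$V_J(q)=\sum_{i\in\Lambda}\Biggl[\frac{\lambda}{4!}q_i^4-\frac{\mu^2}{2}q_i^2+\frac{J}{4}\sum_{j\in\mathcal{N}(i)}(q_i-q_j)^2\Biggr],$$ where $\Lambda$, $\mathcal N(i)$ are as in the context. Let $\mathcal{A}(N,\lambda,\mu^2)$ be the set of pairs $(q,J)\in\mathbb{C}^N\times\mathbb{C}$ such that $\frac{\partial V_J}{\partial q_i}(q)=0$ for all $i=1,\dots,N$ and $\det \mathcal{H}_{V_J}(q)=0$, where $\mathcal{H}_{V_J}(q)=\bigl(\frac{\partial^2 V_J(q)}{\partial q_i\partial q_j}\bigr)_{i,j}$ is the Hessian matrix. Let $$\mathcal{S}(N,\lambda,\mu^2)=\{J\in\mathbb{C}\mid (q,J)\in\mathcal{A}(N,\lambda,\mu^2)\text{ for some } q\in\mathbb{C}^N\}$$ be the set of couplings $J$ for which $V_J$ has at least one singular (degenerate) complex stationary point. Then $\mathcal{S}(N,\lambda,\mu^2)$ is a finite subset of $\mathbb{C}$.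
   Context: $\Lambda$ is the square lattice $\{1,\dots,L\}^2$ (periodic boundary conditions, i.e. the discrete torus $(\mathbb{Z}/L\mathbb{Z})^2$) with its $N=L^2$ sites labelled $1,\dots,N$, and $q=(q_1,\dots,q_N)$ assigns a variable $q_i$ to each site $i$. For $i\in\Lambda$, $\mathcal{N}(i)$ denotes the four nearest-neighbouring sites of $i$ on the periodic square lattice (counted with multiplicity if they coincide). This is the potential energy of the two-dimensional nearest-neighbour $\phi^4$ model with coupling $J$; here $q$ and $J$ are allowed to be complex. *)

From HB Require Import structures.
From mathcomp Require Import all_boot all_order all_algebra.
From mathcomp Require Import reals.
From mathcomp Require Import complex.
From mathcomp Require Import mpoly.
Set Implicit Arguments. Unset Strict Implicit. Unset Printing Implicit Defensive.
Import Order.TTheory GRing.Theory Num.Theory.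
Local Open Scope ring_scope.

(* Sites of the periodic L x L lattice (discrete torus (Z/LZ)^2). *)
Definition site (L : nat) : finType := ('I_L * 'I_L)%type.

(* Number of sites N = #|site L| (= L^2); sites are labelled by 'I_N
   through enum_rank. *)
Definition nsites (L : nat) : nat := #|{: site L}|.

(* The four nearest neighbours of a site on the periodic square lattice,
   listed with multiplicity. *)
Definition nbrs (L : nat) (s : site L) : seq (site L) :=
  [:: (ordS s.1, s.2); (ord_pred s.1, s.2); (s.1, ordS s.2); (s.1, ord_pred s.2)].

Definition qv (R : realType) (L : nat) (s : site L) : {mpoly R[i][nsites L]} :=
  'X_(enum_rank s).

Definition phi4V (R : realType) (L : nat) (lam mu J : R[i]) : {mpoly R[i][nsites L]} :=
  \sum_(s : site L)
    ( (lam / 24%:R) *: (qv R s) ^+ 4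
    - (mu ^+ 2 / 2%:R) *: (qv R s) ^+ 2
    + (J / 4%:R) *: \sum_(t <- nbrs s) (qv R s - qv R t) ^+ 2 ).

Definition hessV (R : realType) (L : nat) (lam mu J : R[i])
    (q : 'I_(nsites L) -> R[i]) : 'M[R[i]]_(nsites L) :=
  \matrix_(i, j) ((phi4V L lam mu J)^`M(j)^`M(i)).@[q].

Definition inA (R : realType) (L : nat) (lam mu : R[i])
    (q : 'I_(nsites L) -> R[i]) (J : R[i]) : Prop :=
  (forall i : 'I_(nsites L), ((phi4V L lam mu J)^`M(i)).@[q] = 0)
  /\ \det (@hessV R L lam mu J q) = 0.

Definition inS (R : realType) (L : nat) (lam mu J : R[i]) : Prop :=
  exists q : 'I_(nsites L) -> R[i], @inA R L lam mu q J.

From HB Require Import structures.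
From mathcomp Require Import all_boot all_order all_fingroup all_algebra all_field.
From mathcomp Require Import ring lra.
From mathcomp Require Import reals complex mpoly.
Set Implicit Arguments. Unset Strict Implicit. Unset Printing Implicit Defensive.
Import Order.TTheory GRing.Theory Num.Theory.
Local Open Scope ring_scope.
Local Open Scope complex_scope.

(* The coupling set S is defined by an existential first-order formula over C with the
   single free variable J, so by quantifier elimination in algebraically closed fields it
   is either finite or cofinite.  It is not cofinite because every small coupling is
   regular.  For |J| small, stationary points are bounded a priori; at such a point the
   uncoupled equation (lam/6) q_i^3 - mu^2 q_i ~ 0 forces the diagonal Hessian entry
   (lam/2) q_i^2 - mu^2 to stay at distance >= |mu|^2/2 from 0, because the one-site
   cubic has only nondegenerate critical points; the coupling contributes O(|J|) to every
   Hessian entry, so the Hessian stays diagonally dominant, hence invertible. *)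

(** * Definable subsets of an algebraically closed field *)

Section DefinableSets.
Variable F : decFieldType.
Implicit Types (P Q : pred F) (E : seq F).

Definition almost_const P := exists E (b : bool), forall x, x \notin E -> P x = b.

Lemma almost_const_cst (b : bool) : almost_const (fun _ => b).
Proof. by exists [::], b. Qed.

Lemma almost_const2 (op : bool -> bool -> bool) P Q :
  almost_const P -> almost_const Q -> almost_const (fun x => op (P x) (Q x)).
Proof.
move=> [E1 [b1 PE]] [E2 [b2 QE]]; exists (E1 ++ E2), (op b1 b2) => x.
by rewrite mem_cat negb_or => /andP[/PE -> /QE ->].
Qed.

Lemma almost_const_root (p : {poly F}) : almost_const (root p).
Proof.
have [s [r [-> r_noroot]]] := dec_factor_theorem p.
have [->|r0] := eqVneq r 0; first by exists [::], true => x _; rewrite mul0r root0.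
exists s, false => x xNs; apply/negbTE.
by rewrite rootM root_prod_XsubC (negbTE (r_noroot r0 x)) (negbTE xNs).
Qed.

Lemma eval_rterm_poly (t : GRing.term F) : GRing.rterm t ->
  exists p : {poly F}, forall x, GRing.eval [:: x] t = p.[x].
Proof.
move=> rt; exists (ClosedFieldQE.eval_poly [::] (ClosedFieldQE.abstrX 0 t)) => x.
by rewrite ClosedFieldQE.abstrXP.
Qed.

Lemma almost_const_qf_eval (f : GRing.formula F) : GRing.rformula f ->
  almost_const (fun x => GRing.qf_eval [:: x] f).
Proof.
elim: f => //=; try by move=> *; apply: almost_const_cst.
- move=> t1 t2 /andP[/eval_rterm_poly[p1 e1] /eval_rterm_poly[p2 e2]].
  have [E [b hE]] := almost_const_root (p1 - p2).
  by exists E, b => x /hE <-; rewrite e1 e2 rootE hornerD hornerN subr_eq0.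
- by move=> f1 IH1 f2 IH2 /andP[/IH1 h1 /IH2 h2]; apply: (almost_const2 andb).
- by move=> f1 IH1 f2 IH2 /andP[/IH1 h1 /IH2 h2]; apply: (almost_const2 orb).
- by move=> f1 IH1 f2 IH2 /andP[/IH1 h1 /IH2 h2]; apply: (almost_const2 implb).
- by move=> f1 IH1 /IH1 h1; exact: (almost_const2 (fun b _ => ~~ b) h1 h1).
Qed.

End DefinableSets.

Lemma definable_finite_or_cofinite (F : closedFieldType) (f : GRing.formula F) :
  exists E : seq F, (forall x, GRing.holds [:: x] f -> x \in E)
                 \/ (forall x, x \notin E -> GRing.holds [:: x] f).
Proof.
pose g := GRing.quantifier_elim (@ClosedFieldQE.ex_elim F) (GRing.to_rform f).
have gP x : reflect (GRing.holds [:: x] f) (GRing.qf_eval [:: x] g).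
  apply: (iffP (GRing.quantifier_elim_rformP _ _ _ (GRing.to_rform_rformula f))).
  - exact: ClosedFieldQE.wf_ex_elim.
  - exact: ClosedFieldQE.holds_ex_elim (@solve_monicpoly F).
  - by move/GRing.to_rformP.
  - by move/GRing.to_rformP.
have [|E [[] gE]] := @almost_const_qf_eval _ g.
- have := GRing.quantifier_elim_wf (@ClosedFieldQE.wf_ex_elim F).
  by move=> /(_ _ (GRing.to_rform_rformula f)) /andP[].
- by exists E; right=> x /gE/gP.
- by exists E; left=> x /gP; apply: contraTT => /gE ->.
Qed.

Lemma injective_notin_seq (T : eqType) (c : nat -> T) (E : seq T) :
  injective c -> exists k, c k \notin E.
Proof.
move=> c_inj; pose s := map c (iota 0 (size E).+1).
have [/allP s_sub|/allPn[_ /mapP[k _ ->] ckE]] := boolP (all (mem E) s); last by exists k.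
have := uniq_leq_size _ s_sub; rewrite map_inj_uniq // iota_uniq.
by rewrite size_map size_iota ltnn => /(_ isT).
Qed.

Section Terms.
Variable F : fieldType.
Implicit Types (e : seq F).

Lemma eval_big_Add e I (r : seq I) (t : I -> GRing.term F) :
  GRing.eval e (\big[GRing.Add/GRing.Const 0]_(i <- r) t i) = \sum_(i <- r) GRing.eval e (t i).
Proof. exact: (big_morph (GRing.eval e)). Qed.

Lemma eval_big_Mul e I (r : seq I) (t : I -> GRing.term F) :
  GRing.eval e (\big[GRing.Mul/GRing.Const 1]_(i <- r) t i) = \prod_(i <- r) GRing.eval e (t i).
Proof. exact: (big_morph (GRing.eval e)). Qed.

Lemma holds_big_And e (I : eqType) (r : seq I) (f : I -> GRing.formula F) :
  GRing.holds e (\big[GRing.And/GRing.True]_(i <- r) f i) <-> {in r, forall i, GRing.holds e (f i)}.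
Proof.
elim: r => [|i r IH]; rewrite ?big_nil ?big_cons //=.
split=> [[fi /IH fr] j|fr]; first by rewrite in_cons => /predU1P[->|/fr].
by split; [apply: fr; rewrite mem_head | apply/IH => j rj; apply: fr; rewrite in_cons rj orbT].
Qed.

Definition det_term n (M : 'I_n -> 'I_n -> GRing.term F) : GRing.term F :=
  \big[GRing.Add/GRing.Const 0]_(s : 'S_n)
     GRing.Mul (GRing.Const ((-1) ^+ s)) (\big[GRing.Mul/GRing.Const 1]_(i : 'I_n) M i (s i)).

Lemma eval_det_term e n (M : 'I_n -> 'I_n -> GRing.term F) :
  GRing.eval e (det_term M) = \det (\matrix_(i, j) GRing.eval e (M i j)).
Proof.
rewrite eval_big_Add; apply: eq_bigr => s _ /=.
by rewrite eval_big_Mul; congr (_ * _); apply: eq_bigr => i _; rewrite mxE.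
Qed.

(* The variable [i : 'I_n] of the polynomial becomes the term variable ['X_i.+1],
   leaving ['X_0] free for a parameter. *)
Definition mpoly_term n (p : {mpoly F[n]}) : GRing.term F :=
  \big[GRing.Add/GRing.Const 0]_(m <- msupp p) GRing.Mul (GRing.Const p@_m)
     (\big[GRing.Mul/GRing.Const 1]_(i : 'I_n) GRing.Exp (GRing.Var F i.+1) (m i)).

Lemma eval_mpoly_term e n (p : {mpoly F[n]}) :
  GRing.eval e (mpoly_term p) = p.@[fun i : 'I_n => e`_i.+1].
Proof.
rewrite mevalE eval_big_Add; apply: eq_bigr => m _ /=.
by rewrite eval_big_Mul.
Qed.

End Terms.

Section MpolyDeriv.
Variables (F : fieldType) (n : nat).
Implicit Types (p : {mpoly F[n]}).

Lemma mderiv_mX (k i : 'I_n) : ('X_k : {mpoly F[n]})^`M(i) = ((k == i)%:R)%:MP.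
Proof.
rewrite mderivX mnm1E; have [->|_] := eqVneq k i; last by rewrite scale0r mpolyC0.
have -> : (U_(i) - U_(i))%MM = 0%MM by apply/mnmP => j; rewrite mnmBE subnn mnm0E.
by rewrite mpolyX0 scale1r mpolyC1.
Qed.

Lemma mderivXn p k (i : 'I_n) : (p ^+ k.+1)^`M(i) = (p ^+ k * p^`M(i)) *+ k.+1.
Proof.
elim: k => [|k IH]; first by rewrite expr0 expr1 mul1r.
by rewrite exprS mderivM IH mulrnAr mulrA -exprS mulrC [RHS]mulrS.
Qed.

Lemma mderiv_sum I (r : seq I) (G : I -> {mpoly F[n]}) (i : 'I_n) :
  (\sum_(x <- r) G x)^`M(i) = \sum_(x <- r) (G x)^`M(i).
Proof. exact: raddf_sum. Qed.

Lemma meval_sum I (r : seq I) (G : I -> {mpoly F[n]}) (v : 'I_n -> F) :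
  (\sum_(x <- r) G x).@[v] = \sum_(x <- r) (G x).@[v].
Proof. exact: raddf_sum. Qed.

End MpolyDeriv.

(** * Complex norm estimates *)

Section ComplexNorm.
Variable R : rcfType.
Implicit Types x y : R[i].
Local Notation normc := (@Normc.normc R).

Lemma normcE x : `|x| = (normc x)%:C.
Proof. by case: x. Qed.

Lemma normc_ge0 x : 0 <= normc x.
Proof. by case: x => a b; apply: sqrtr_ge0. Qed.

Lemma normc_gt0 x : (0 < normc x) = (x != 0).
Proof. by rewrite -ltcR -normcE normr_gt0. Qed.

Lemma normcX x k : normc (x ^+ k) = normc x ^+ k.
Proof. by elim: k => [|k IH]; rewrite ?Normc.normc1 // !exprS Normc.normcM IH. Qed.

Lemma normcD_le x y : normc (x + y) <= normc x + normc y.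
Proof. exact: le_normcD. Qed.

Lemma normcB_le x y : normc (x - y) <= normc x + normc y.
Proof. by rewrite -(normcN y); apply: le_normcD. Qed.

Lemma normc_sum_le I (r : seq I) (P : pred I) (G : I -> R[i]) :
  normc (\sum_(i <- r | P i) G i) <= \sum_(i <- r | P i) normc (G i).
Proof.
elim/big_rec2: _ => [|i y x _ xy]; first by rewrite Normc.normc0.
by rewrite (le_trans (normcD_le _ _)) ?lerD2l.
Qed.

Lemma normc_nat k : normc k%:R = k%:R.
Proof. by rewrite (normcMn 1) Normc.normc1. Qed.

Lemma normc_real (a : R) : normc a%:C = `|a|.
Proof. by apply: complexI; rewrite -normcE normc_def /= expr0n addr0 sqrtr_sqr. Qed.

Lemma le_add1_cubic (a w x : R) : 0 < a -> 0 <= x -> 0 <= w ->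
  a * x ^+ 3 <= w * x -> x <= 1 + w / a.
Proof.
move=> a0 x0 w0 cubic; have w_a : 0 <= w / a := divr_ge0 w0 (ltW a0).
have [x1|x1] := lerP x 1; first lra.
have ax2 : a * x ^+ 2 <= w.
  by rewrite -(ler_pM2r (lt_trans ltr01 x1)) -mulrA -exprSr.
have : x <= w / a by rewrite ler_pdivlMr //; nra.
lra.
Qed.

Lemma det_neq0_col_dominant n (A : 'M[R[i]]_n) :
  (forall j, \sum_(k | k != j) normc (A k j) < normc (A j j)) -> \det A != 0.
Proof.
move=> dominant; apply/negP => /det0P[v v0 vA].
have [k0 vk0] : exists k, v 0 k != 0.
  apply/existsP; apply: contraR v0 => /existsPn v_eq0; apply/eqP/matrixP => i k.
  by rewrite ord1 mxE; apply/eqP/negPn/v_eq0.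
have [j _ jmax] := @arg_maxP _ _ _ k0 xpredT (fun k => normc (v 0 k)) isT.
have vj_gt0 : 0 < normc (v 0 j) by rewrite (lt_le_trans _ (jmax k0 isT)) ?normc_gt0.
have : v 0 j * A j j = - \sum_(k | k != j) v 0 k * A k j.
  apply/eqP; rewrite -addr_eq0; move/matrixP: vA => /(_ 0 j).
  by rewrite !mxE (bigD1 j) //= => ->.
move=> /(congr1 normc); rewrite normcN Normc.normcM => vAjj.
have : normc (v 0 j) * normc (A j j) <= normc (v 0 j) * \sum_(k | k != j) normc (A k j).
  rewrite vAjj mulr_sumr; apply: le_trans (normc_sum_le _ _ _) _.
  apply: ler_sum => k _; rewrite Normc.normcM.
  by apply: ler_wpM2r; [apply: normc_ge0 | apply: jmax].
by rewrite ler_pM2l // => diag_le; have := dominant j; rewrite ltNge diag_le.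
Qed.

(* With f := lam/6 x^3 - mu^2 x and h := lam/2 x^2 - mu^2 we have 3 f = x (h - 2 mu^2):
   a small f forces h to be large or x to be small, and a small x makes h close to -mu^2. *)
Lemma normc_onsite_hess_ge (lam mu x : R[i]) (r : R) : 0 <= r ->
  normc (lam / 2%:R) * r ^+ 2 <= normc (mu ^+ 2) / 2 ->
  3 * normc (lam / 6%:R * x ^+ 3 - mu ^+ 2 * x) <= normc (mu ^+ 2) * r ->
  normc (mu ^+ 2) / 2 <= normc (lam / 2%:R * x ^+ 2 - mu ^+ 2).
Proof.
set u := normc (mu ^+ 2); set h := lam / 2%:R * x ^+ 2 - mu ^+ 2.
move=> r0 r_small f_small; rewrite leNgt; apply/negP => h_small.
have u_gt0 : 0 < u by have := normc_ge0 h; lra.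
have three_f : 3%:R * (lam / 6%:R * x ^+ 3 - mu ^+ 2 * x) = x * (h - 2%:R * mu ^+ 2).
  by rewrite /h; field.
have far : u <= normc (h - 2%:R * mu ^+ 2).
  have := normcB_le h (h - 2%:R * mu ^+ 2).
  rewrite opprB addrC subrK Normc.normcM normc_nat -/u.
  lra.
have x_small : normc x <= r.
  have := congr1 normc three_f; rewrite !Normc.normcM normc_nat.
  have := normc_ge0 x; have := normc_ge0 (lam / 6%:R * x ^+ 3 - mu ^+ 2 * x).
  nra.
have := normcB_le (lam / 2%:R * x ^+ 2) h.
rewrite /h opprB addrC subrK -/h -/u Normc.normcM normcX.
have x2 : normc x ^+ 2 <= r ^+ 2 by have := normc_ge0 x; nra.
have := normc_ge0 (lam / 2%:R); nra.
Qed.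
End ComplexNorm.

(** * The phi^4 potential *)

Section Phi4Formula.
Variables (R : realType) (L : nat) (lam mu : R[i]).
Local Notation n := (nsites L).
Local Notation MP := {mpoly R[i][n]}.

Definition onsite : MP :=
  \sum_(s : site L) ((lam / 24%:R) *: qv R s ^+ 4 - (mu ^+ 2 / 2%:R) *: qv R s ^+ 2).

Definition coupling : MP :=
  \sum_(s : site L) (1 / 4%:R) *: \sum_(t <- nbrs s) (qv R s - qv R t) ^+ 2.

Lemma phi4V_split J : phi4V L lam mu J = onsite + J *: coupling.
Proof.
rewrite /phi4V /onsite /coupling scaler_sumr -big_split; apply: eq_bigr => s _.
by rewrite scalerA mulrA mulr1.
Qed.

(* [D] is a linear operator such as a partial derivative; ['X_0] stands for [J]. *)
Definition phi4_term (D : MP -> MP) : GRing.term R[i] :=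
  GRing.Add (mpoly_term (D onsite)) (GRing.Mul (GRing.Var _ 0) (mpoly_term (D coupling))).

Lemma eval_phi4_term (D : MP -> MP) (e : seq R[i]) (q : 'I_n -> R[i]) :
  linear D -> (forall i : 'I_n, e`_i.+1 = q i) ->
  GRing.eval e (phi4_term D) = (D (phi4V L lam mu e`_0)).@[q].
Proof.
move=> linD eq_q; rewrite /= !eval_mpoly_term !(meval_eq _ eq_q) phi4V_split.
by rewrite (addrC onsite) linD mevalD mevalZ addrC.
Qed.

Definition singular_body : GRing.formula R[i] :=
  GRing.And (\big[GRing.And/GRing.True]_(i : 'I_n)
               GRing.Equal (phi4_term (mderiv i)) (GRing.Const 0))
            (GRing.Equal (det_term (fun i j => phi4_term (fun p => p^`M(j)^`M(i))))
                         (GRing.Const 0)).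

Definition singular_formula : GRing.formula R[i] :=
  foldr GRing.Exists singular_body (iota 1 n).

Lemma mderiv2_linear (i j : 'I_n) : linear (fun p : MP => p^`M(j)^`M(i)).
Proof. by move=> a p p'; rewrite !mderivD !mderivZ. Qed.

Lemma holds_singular_body (e : seq R[i]) (q : 'I_n -> R[i]) :
  (forall i : 'I_n, e`_i.+1 = q i) -> GRing.holds e singular_body <-> inA lam mu q e`_0.
Proof.
move=> eq_q; rewrite /= holds_big_And eval_det_term.
have -> : \matrix_(i, j) GRing.eval e (phi4_term (fun p => p^`M(j)^`M(i))) = hessV lam mu e`_0 q.
  by apply/matrixP => i j; rewrite !mxE (eval_phi4_term (mderiv2_linear i j) eq_q).
split=> [[stat sing]|[stat sing]]; split=> // i.
  by rewrite -(eval_phi4_term (mderiv_is_linear i) eq_q); apply: stat (mem_index_enum i).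
by move=> _; exact: etrans (eval_phi4_term (mderiv_is_linear i) eq_q) (stat i).
Qed.

Lemma inS_singular_formula J : inS L lam mu J <-> GRing.holds [:: J] singular_formula.
Proof.
rewrite -GRing.foldExistsP; split=> [[q qA]|[e same_e body_e]].
  exists (J :: [seq q i | i <- enum 'I_n]).
    move=> [|k] //; rewrite inE mem_iota add1n ltnS /= => /negbTE k_big.
    by rewrite nth_nil nth_default // size_map size_enum_ord leqNgt -ltnS k_big.
  apply/(holds_singular_body (q := q)) => // i.
  by rewrite /= (nth_map i) ?size_enum_ord // nth_ord_enum.
have e0 : e`_0 = J by rewrite -same_e // inE mem_iota.
by exists (fun i => e`_i.+1); rewrite -e0; apply/(holds_singular_body (q := fun i => e`_i.+1)).
Qed.
End Phi4Formula.

Section Phi4Derivatives.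
Variables (R : realType) (L : nat) (lam mu : R[i]).
Local Notation n := (nsites L).
Local Notation MP := {mpoly R[i][n]}.
Local Notation onsite := (onsite L lam mu).
Local Notation coupling := (coupling R L).
Implicit Types (q : 'I_n -> R[i]) (i j : 'I_n).

Lemma mderiv_onsite i : onsite^`M(i) = (lam / 6%:R) *: 'X_i ^+ 3 - mu ^+ 2 *: 'X_i.
Proof.
rewrite /onsite mderiv_sum (bigD1 (enum_val i)) //= big1 => [|s s_i]; last first.
  rewrite mderivB !mderivZ !mderivXn /qv mderiv_mX.
  by rewrite -(inj_eq enum_val_inj) enum_rankK (negbTE s_i) mpolyC0 !mulr0 !mul0rn !scaler0 subr0.
have c6 : lam / 24%:R *+ 4 = lam / 6%:R by rewrite -mulr_natr; field.
have c2 : mu ^+ 2 / 2%:R *+ 2 = mu ^+ 2 by rewrite -mulr_natr; field.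
rewrite addr0 mderivB !mderivZ !mderivXn /qv enum_valK mderiv_mX eqxx mpolyC1 !mulr1 expr1.
by rewrite -!scalerMnr (scalerMnl (lam / 24%:R)) (scalerMnl (mu ^+ 2 / 2%:R)) c6 c2.
Qed.

Lemma meval_grad_phi4V J q i : ((phi4V L lam mu J)^`M(i)).@[q] =
  lam / 6%:R * q i ^+ 3 - mu ^+ 2 * q i + J * (coupling^`M(i)).@[q].
Proof.
rewrite phi4V_split mderivD mderivZ mevalD mevalZ mderiv_onsite.
by rewrite mevalB !mevalZ rmorphXn /= !mevalXU.
Qed.

Lemma hessV_entry J q i j : hessV lam mu J q i j =
  (i == j)%:R * (lam / 2%:R * q i ^+ 2 - mu ^+ 2) + J * (coupling^`M(j)^`M(i)).@[q].
Proof.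
rewrite /hessV mxE phi4V_split !(mderivD, mderivZ) mevalD mevalZ mderiv_onsite.
rewrite mderivB !mderivZ mderivXn mderiv_mX mevalB !mevalZ mevalMn mevalM rmorphXn /=.
rewrite !mevalC !mevalXU.
rewrite eq_sym; case: eqVneq => [->|_]; last by rewrite !mulr0 mul0rn !mulr0 subrr mul0r.
by congr (_ + _); rewrite !mulr1 mul1r -mulr_natr; field.
Qed.

Definition incidence (s t : site L) i : R[i] :=
  (enum_rank s == i)%:R - (enum_rank t == i)%:R.

Lemma mderiv_qv_sub (s t : site L) i : (qv R s - qv R t)^`M(i) = (incidence s t i)%:MP.
Proof. by rewrite mderivB /qv !mderiv_mX raddfB. Qed.

Lemma meval_grad_coupling q i : (coupling^`M(i)).@[q] =
  \sum_(s : site L) \sum_(t <- nbrs s) (q (enum_rank s) - q (enum_rank t)) * incidence s t i / 2%:R.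
Proof.
rewrite /coupling mderiv_sum meval_sum; apply: eq_bigr => s _.
rewrite mderivZ mevalZ mderiv_sum meval_sum mulr_sumr; apply: eq_bigr => t _.
rewrite mderivXn expr1 mderiv_qv_sub mevalMn mevalM mevalB /qv !mevalXU mevalC.
by rewrite -mulr_natr; field.
Qed.

Lemma meval_hess_coupling q i j : (coupling^`M(j)^`M(i)).@[q] =
  \sum_(s : site L) \sum_(t <- nbrs s) incidence s t j * incidence s t i / 2%:R.
Proof.
rewrite /coupling [_^`M(j)]mderiv_sum mderiv_sum meval_sum; apply: eq_bigr => s _.
rewrite !mderivZ mevalZ [_^`M(j)]mderiv_sum mderiv_sum meval_sum mulr_sumr.
apply: eq_bigr => t _.
rewrite mderivXn expr1 mderiv_qv_sub mderivMn mderivM mderiv_qv_sub mderivC mulr0 addr0.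
by rewrite mevalMn mevalM !mevalC -mulr_natr; field.
Qed.
End Phi4Derivatives.

Arguments incidence {R L} s t i.

Section CouplingBounds.
Variables (R : realType) (L : nat).
Local Notation n := (nsites L).
Local Notation normc := (@Normc.normc R).
Local Notation coupling := (coupling R L).
Implicit Types (q : 'I_n -> R[i]) (i j : 'I_n).

Definition nbr_pairs : R := \sum_(s : site L) \sum_(t <- nbrs s) 1.

Lemma nbr_pairs_ge0 : 0 <= nbr_pairs.
Proof. by apply: sumr_ge0 => s _; apply: sumr_ge0 => t _; apply: ler01. Qed.

Lemma normc_incidence (s t : site L) i : normc (incidence s t i) <= 1.
Proof.
rewrite /incidence; case: (_ == i); case: (_ == i);
  by rewrite ?subrr ?subr0 ?sub0r ?normcN ?Normc.normc0 ?Normc.normc1 ?ler01.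
Qed.

Lemma normc_nbr_sum_le (G : site L -> site L -> R[i]) (x : R) :
  (forall s t, normc (G s t) <= x) ->
  normc (\sum_(s : site L) \sum_(t <- nbrs s) G s t) <= nbr_pairs * x.
Proof.
move=> Gx; rewrite /nbr_pairs mulr_suml; apply: le_trans (normc_sum_le _ _ _) _.
apply: ler_sum => s _; rewrite mulr_suml; apply: le_trans (normc_sum_le _ _ _) _.
by apply: ler_sum => t _; rewrite mul1r.
Qed.

Lemma normc_grad_coupling q i M : (forall k, normc (q k) <= M) ->
  normc ((coupling^`M(i)).@[q]) <= nbr_pairs * M.
Proof.
move=> qM; rewrite meval_grad_coupling; apply: normc_nbr_sum_le => s t.
rewrite !Normc.normcM Normc.normcV normc_nat.
have qst := le_trans (normcB_le _ _) (lerD (qM (enum_rank s)) (qM (enum_rank t))).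
have := normc_incidence s t i; have := normc_ge0 (incidence (R := R) s t i).
have := normc_ge0 (q (enum_rank s) - q (enum_rank t)).
nra.
Qed.

Lemma normc_hess_coupling q i j : normc ((coupling^`M(j)^`M(i)).@[q]) <= nbr_pairs.
Proof.
rewrite meval_hess_coupling -[nbr_pairs]mulr1; apply: normc_nbr_sum_le => s t.
rewrite !Normc.normcM Normc.normcV normc_nat.
have := normc_incidence s t i; have := normc_ge0 (incidence (R := R) s t i).
have := normc_incidence s t j; have := normc_ge0 (incidence (R := R) s t j).
nra.
Qed.
End CouplingBounds.

Section SmallCoupling.
Variables (R : realType) (L : nat) (lam mu : R[i]).
Hypotheses (lam_neq0 : lam != 0) (mu_neq0 : mu != 0).
Local Notation n := (nsites L).
Local Notation normc := (@Normc.normc R).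
Local Notation coupling := (coupling R L).
Local Notation C := (nbr_pairs R L).
Local Notation u := (normc (mu ^+ 2)).
Local Notation K := (1 + (normc (mu ^+ 2) + C) / normc (lam / 6%:R)).
Implicit Types (q : 'I_n -> R[i]) (J : R[i]).

Lemma normc_stationary_le J q : normc J <= 1 ->
  (forall i, ((phi4V L lam mu J)^`M(i)).@[q] = 0) ->
  forall k, normc (q k) <= K.
Proof.
move=> J1 stat k; have [j _ jmax] := @arg_maxP _ _ _ k xpredT (fun k => normc (q k)) isT.
have qM k' : normc (q k') <= normc (q j) by apply: jmax.
have a_gt0 : 0 < normc (lam / 6%:R).
  by rewrite normc_gt0 mulf_eq0 negb_or lam_neq0 invr_eq0 pnatr_eq0.
have cubic : normc (lam / 6%:R) * normc (q j) ^+ 3 <= (normc (mu ^+ 2) + C) * normc (q j).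
  have : lam / 6%:R * q j ^+ 3 = mu ^+ 2 * q j - J * (coupling^`M(j)).@[q].
    have := stat j; rewrite meval_grad_phi4V => grad0.
    by apply/eqP; rewrite -subr_eq0 -grad0; apply/eqP; ring.
  move=> /(congr1 normc); rewrite Normc.normcM normcX => ->.
  apply: le_trans (normcB_le _ _) _; rewrite !Normc.normcM.
  have := normc_grad_coupling j qM; have := normc_ge0 J; have := normc_ge0 (q j).
  have := normc_ge0 ((coupling^`M(j)).@[q]); nra.
apply: le_trans (qM k) (le_add1_cubic a_gt0 (normc_ge0 _) _ cubic).
by rewrite addr_ge0 ?normc_ge0 ?nbr_pairs_ge0.
Qed.

Lemma hessV_col_dominant J q (theta : R) :
  (forall i, theta <= normc (lam / 2%:R * q i ^+ 2 - mu ^+ 2)) -> n%:R * (normc J * C) < theta ->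
  forall j, \sum_(k | k != j) normc (hessV lam mu J q k j) < normc (hessV lam mu J q j j).
Proof.
move=> diag_ge small j; pose g k := normc (J * (coupling^`M(j)^`M(k)).@[q]).
have g_le k : g k <= normc J * C.
  by rewrite /g Normc.normcM ler_wpM2l ?normc_ge0 ?normc_hess_coupling.
have offdiag k : k != j -> normc (hessV lam mu J q k j) = g k.
  by move=> kj; rewrite hessV_entry (negbTE kj) mul0r add0r.
have diag : normc (lam / 2%:R * q j ^+ 2 - mu ^+ 2) - g j <= normc (hessV lam mu J q j j).
  rewrite hessV_entry eqxx mul1r lerBlDr.
  set h := _ - mu ^+ 2; set Jb := J * _.
  by have := normcB_le (h + Jb) Jb; rewrite addrK.
have sum_g : \sum_k g k <= n%:R * (normc J * C).
  apply: le_trans (ler_sum _ (fun k _ => g_le k)) _.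
  by rewrite sumr_const card_ord mulr_natl.
rewrite (eq_bigr g) => [|k /offdiag //]; apply: lt_le_trans diag.
move: sum_g; rewrite (bigD1 j) //= => sum_g.
by have := diag_ge j; lra.
Qed.

Lemma not_inA_small_coupling J q (r d : R) : 0 <= r ->
  normc (lam / 2%:R) * r ^+ 2 <= u / 2 -> normc J <= d -> d <= 1 ->
  3 * (d * (C * K)) <= u * r -> n%:R * (d * C) < u / 2 -> ~ inA lam mu q J.
Proof.
move=> r0 r_small Jd d1 grad_small coupling_small [stat sing].
have qK := normc_stationary_le (le_trans Jd d1) stat.
have diag_ge i : u / 2 <= normc (lam / 2%:R * q i ^+ 2 - mu ^+ 2).
  apply: normc_onsite_hess_ge r0 r_small _.
  have := stat i; rewrite meval_grad_phi4V => /eqP; rewrite addr_eq0 => /eqP ->.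
  rewrite normcN Normc.normcM.
  have gK : normc ((coupling^`M(i)).@[q]) <= C * K by apply: normc_grad_coupling.
  have : normc J * normc ((coupling^`M(i)).@[q]) <= d * (C * K).
    by apply: ler_pM; rewrite ?normc_ge0.
  lra.
suff dominant : n%:R * (normc J * C) < u / 2.
  by have := det_neq0_col_dominant (hessV_col_dominant diag_ge dominant); rewrite sing eqxx.
have : n%:R * (normc J * C) <= n%:R * (d * C).
  by apply: ler_wpM2l; rewrite ?ler0n // ler_wpM2r ?nbr_pairs_ge0.
lra.
Qed.

Lemma small_coupling_nonsingular :
  exists d : R, 0 < d /\ forall J, normc J < d -> ~ inS L lam mu J.
Proof.
pose b := normc (lam / 2%:R).
have b_gt0 : 0 < b by rewrite normc_gt0 mulf_eq0 negb_or lam_neq0 invr_eq0 pnatr_eq0.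
have u_gt0 : 0 < u by rewrite normc_gt0 expf_neq0.
have C_ge0 := nbr_pairs_ge0 R L.
have K_ge0 : 0 <= K.
  by apply: addr_ge0 => //; apply: divr_ge0; [apply: addr_ge0 | ]; rewrite ?normc_ge0.
pose r := Num.min 1 (u / (2 * b)).
have r_gt0 : 0 < r by rewrite lt_min ltr01 /=; apply: divr_gt0 => //; apply: mulr_gt0.
have r_le1 : r <= 1 by rewrite ge_min lexx.
have br : b * r <= u / 2.
  have : r <= u / (2 * b) by rewrite ge_min lexx orbT.
  by rewrite ler_pdivlMr ?mulr_gt0 //; lra.
pose D := 1 + C * K + n%:R * C.
have [CK_ge0 nC_ge0] : 0 <= C * K /\ 0 <= n%:R * C by rewrite !mulr_ge0 ?ler0n.
pose d := Num.min 1 (u * r / (4 * D)).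
have d_gt0 : 0 < d.
  by rewrite lt_min ltr01 /=; apply: divr_gt0; apply: mulr_gt0 => //; rewrite /D; lra.
have dD : d * D <= u * r / 4.
  have : d <= u * r / (4 * D) by rewrite ge_min lexx orbT.
  by rewrite ler_pdivlMr ?mulr_gt0 //; rewrite /D; lra.
have [dCK dnC] : d * (C * K) <= d * D /\ d * (n%:R * C) <= d * D.
  by split; apply: ler_wpM2l; rewrite ?ltW // /D; lra.
have ur : 0 <= u * r <= u by apply/andP; split; nra.
exists d; split=> // J Jd [q]; apply: (not_inA_small_coupling (r := r) (d := d)).
- exact: ltW r_gt0.
- by rewrite -/b; nra.
- exact: ltW Jd.
- by rewrite ge_min lexx.
- lra.
- rewrite mulrCA; lra.
Qed.
End SmallCoupling.

Theorem proposition1 (R : realType) (L : nat) (hL : (2 <= L)%N)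
    (lam mu : R[i]) (hlam : lam != 0) (hmu : mu != 0) :
  exists s : seq R[i], forall J : R[i], @inS R L lam mu J -> J \in s.
Proof.
have [E [finS|cofinS]] := definable_finite_or_cofinite (singular_formula L lam mu).
  by exists E => J /inS_singular_formula /finS.
have [d [d_gt0 regular]] := small_coupling_nonsingular L hlam hmu.
pose c k : R[i] := (d / k.+2%:R)%:C.
have c_inj : injective c.
  move=> k k' /complexI /(mulfI (lt0r_neq0 d_gt0)) /invr_inj /eqP.
  by rewrite eqr_nat => /eqP [].
have [k ckE] := injective_notin_seq E c_inj.
exfalso; apply: (regular (c k)); last exact/inS_singular_formula/cofinS.
rewrite normc_real ger0_norm ?divr_ge0 ?ler0n ?ltW // ltr_pdivrMr ?ltr0n //.
by rewrite ltr_pMr // ltr1n.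
Qed.
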